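(* Let $L, w \in \mathbb{N}$ with $w \ge 1$ and $L \ge w-1$, let $m,n\in\mathbb{N}$, and let $R(x)=\sum_{d=1}^{d_{\max}} R_d x^d$ with $R_d\ge 0$ and $R(1)=1$. In the $(\lambda(x),R(x),L,w)$ spatially coupled LDGM ensemble described below (whose underlying ensemble has $n$ generator nodes and $m$ information bits), the design rate equals $$ r=\frac{mL}{\,n (L - w + 1) + 2n\sum_{i=1}^{w-1} \bigl(1 - R(\tfrac{i}{w})\bigr)}. $$
   Context: Spatially coupled LDGM ensemble: information bits are placed at positions $0,1,\dots,L-1$, with $m$ information bits at each position. Generator nodes are placed at positions $0,1,\dots,L+w-2$, with $n$ generator nodes at each position. Each generator node at position $j$ independently chooses a degree $d$ with probability $R_d$, and each of its $d$ edges independently chooses a position uniformly from $\{j-w+1,\dots,j\}$ and then an information bit (of the $mw$ bits in that window) at that position. Edges whose chosen position lies outside $[0,L-1]$ are omitted (equivalently, they connect to known bits of value $0$). The information-node degree distribution $\lambda(x)$ plays no role in this claim. The design rate is defined as the total number $mL$ of information bits divided by the expected number of generator nodes that are connected to at least one information bit at a position in $[0,L-1]$. *)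

From mathcomp Require Import all_boot all_order all_algebra.
Set Implicit Arguments. Unset Strict Implicit. Unset Printing Implicit Defensive.
Import Order.TTheory GRing.Theory Num.Theory.
Local Open Scope ring_scope.

(* Positions of information bits: 0..L-1.  Generator positions: 0..L+w-2,
   i.e. j < L + w.-1 (w >= 1).  An edge of a generator node at position j
   chooses an offset k : 'I_w, i.e. the position j - w + 1 + k
   (an integer in {j-w+1,...,j}). *)
Definition in_range (L w j : nat) (k : 'I_w) : bool :=
  (w.-1 <= j + k)%N && (j + k < L + w.-1)%N.

Definition connected_count (L w j d : nat) : nat :=
  #|[set f : {ffun 'I_d -> 'I_w} | [exists i, @in_range L w j (f i)]]|.

Definition prob_connected (K : realFieldType) (L w j d : nat) : K :=
  (connected_count L w j d)%:R / (w ^ d)%:R.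

Definition Rpoly (K : realFieldType) (Rd : nat -> K) (dmax : nat) (x : K) : K :=
  \sum_(1 <= d < dmax.+1) Rd d * x ^+ d.

Definition expected_connected (K : realFieldType) (n L w dmax : nat)
    (Rd : nat -> K) : K :=
  \sum_(j < L + w.-1)
     n%:R * \sum_(1 <= d < dmax.+1) Rd d * prob_connected K L w j d.

Definition design_rate (K : realFieldType) (m n L w dmax : nat)
    (Rd : nat -> K) : K :=
  (m * L)%:R / expected_connected n L w dmax Rd.

(* A degree-d generator at position j is unconnected exactly when all d edge
   offsets avoid [0, L-1]; if b_j of the w offsets do, this has probability
   (b_j / w)^d, so averaging over the degree the node is connected with
   probability 1 - R(b_j / w).  The profile of b_j over the L + w - 1
   generator positions is w-1, ..., 1 on the left boundary, 0 on the L - w + 1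
   interior positions, and 1, ..., w-1 on the right boundary. *)

From mathcomp Require Import all_boot all_order all_algebra zify ring.
Import Order.TTheory GRing.Theory Num.Theory.
Local Open Scope ring_scope.
Set Implicit Arguments.

Definition out_of_range_count (L w j : nat) : nat :=
  #|[pred k : 'I_w | ~~ in_range L j k]|.

Lemma out_of_range_count_le L w j : (out_of_range_count L w j <= w)%N.
Proof. by rewrite -[w in (_ <= w)%N]card_ord max_card. Qed.

Lemma connected_countE L w j d :
  connected_count L w j d = (w ^ d - out_of_range_count L w j ^ d)%N.
Proof.
rewrite /connected_count /out_of_range_count.
set A := [set f : {ffun 'I_d -> 'I_w} | _].
have cardAC : #|~: A| = #|ffun_on_mem 'I_d (mem [pred k : 'I_w | ~~ in_range L j k])|.
  apply: eq_card => f; rewrite !inE negb_exists.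
  by apply/forallP/ffun_onP => /= h x; have := h x.
have := cardsC A; rewrite card_ffun !card_ord cardAC card_ffun_on card_ord.
by move=> <-; rewrite addnK.
Qed.

Lemma prob_connectedE (K : realFieldType) L w j d : (1 <= w)%N ->
  prob_connected K L w j d = 1 - ((out_of_range_count L w j)%:R / w%:R) ^+ d.
Proof.
move=> w_gt0; rewrite /prob_connected connected_countE natrB; last first.
  by case: d => // d; rewrite leq_exp2r ?out_of_range_count_le.
have wd_neq0 : (w ^ d)%:R != 0 :> K by rewrite pnatr_eq0 expn_eq0 negb_and -lt0n w_gt0.
by rewrite mulrBl divff // exprMn exprVn !natrX.
Qed.

Lemma card_ord_interval w a c : (a <= c <= w)%N ->
  #|[pred k : 'I_w | (a <= k < c)%N]| = (c - a)%N.
Proof.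
move=> /andP[le_ac le_cw].
rewrite -sum1_card big_mkcond /=.
rewrite -(big_mkord xpredT (fun k => if (a <= k < c)%N then 1%N else 0%N)).
rewrite (big_cat_nat (leq0n c) le_cw) (big_cat_nat (leq0n a) le_ac) /=.
rewrite (@eq_big_nat _ _ _ 0 a _ (fun _ => 0%N)); last first.
  by move=> i /andP[_ lt_ia]; rewrite leqNgt lt_ia.
rewrite (@eq_big_nat _ _ _ a c _ (fun _ => 1%N)); last by move=> i ->.
rewrite (@eq_big_nat _ _ _ c w _ (fun _ => 0%N)); last first.
  by move=> i /andP[le_ci _]; rewrite ltnNge le_ci andbF.
by rewrite !sum_nat_const_nat; lia.
Qed.

Lemma out_of_range_countE L w j :
  (1 <= w)%N -> (w.-1 <= L)%N -> (j < L + w.-1)%N ->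
  out_of_range_count L w j =
    if (j < w.-1)%N then (w.-1 - j)%N
    else if (j < L)%N then 0%N else (j.+1 - L)%N.
Proof.
move=> w_gt0 le_wL lt_j.
have offsetsE a c : (a <= c <= w)%N ->
    (forall k, (k < w)%N ->
       ~~ ((w.-1 <= j + k) && (j + k < L + w.-1))%N = (a <= k < c)%N) ->
    out_of_range_count L w j = (c - a)%N.
  move=> le_acw offsetP; rewrite -(@card_ord_interval w a c) //.
  by apply: eq_card => k; rewrite !inE offsetP.
case: ifP => left_j; [|case: ifP => mid_j].
- by rewrite (offsetsE 0%N (w.-1 - j)%N) => [||k lt_kw];
    [lia | apply/andP; lia | apply/idP/idP; lia].
- by rewrite (offsetsE 0%N 0%N) => [||k lt_kw];
    [lia | apply/andP; lia | apply/idP/idP; lia].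
- by rewrite (offsetsE (L + w.-1 - j)%N w) => [||k lt_kw];
    [lia | apply/andP; lia | apply/idP/idP; lia].
Qed.

Lemma sum_out_of_range_profile (V : nmodType) (F : nat -> V) L w :
  (1 <= w)%N -> (w.-1 <= L)%N ->
  \sum_(j < L + w.-1) F (out_of_range_count L w j) =
    F 0%N *+ (L - w.-1) + (\sum_(1 <= i < w) F i) *+ 2.
Proof.
move=> w_gt0 le_wL.
have boundaryE : \sum_(1 <= i < w) F i = \sum_(0 <= i < w.-1) F i.+1.
  by rewrite big_add1.
rewrite -(big_mkord xpredT (fun j => F (out_of_range_count L w j))).
rewrite (@big_cat_nat _ _ _ L 0 (L + w.-1)) //; last by lia.
rewrite (big_cat_nat (leq0n _) le_wL) /=.
have leftE : \sum_(0 <= j < w.-1) F (out_of_range_count L w j)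
    = \sum_(1 <= i < w) F i.
  rewrite boundaryE (@eq_big_nat _ _ _ 0 w.-1 _ (fun j => F (w.-1 - j)%N)).
    by rewrite big_nat_rev /=; apply: eq_big_nat => j /andP[_ lt_j]; congr F; lia.
  by move=> j /andP[_ lt_j]; rewrite out_of_range_countE ?lt_j //; lia.
have midE : \sum_(w.-1 <= j < L) F (out_of_range_count L w j) = F 0%N *+ (L - w.-1).
  rewrite -sumr_const_nat; apply: eq_big_nat => j /andP[ge_j lt_j].
  rewrite out_of_range_countE //; last by lia.
  by rewrite ltnNge ge_j lt_j.
have rightE : \sum_(L <= j < L + w.-1) F (out_of_range_count L w j)
    = \sum_(1 <= i < w) F i.
  rewrite -{1}(add0n L) big_addn addKn boundaryE.
  apply: eq_big_nat => j /andP[_ lt_j].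
  by rewrite out_of_range_countE ?ifN; [congr F | ..]; lia.
by rewrite leftE midE rightE addrA [X in X + _]addrC -addrA -mulr2n.
Qed.

Lemma Rpoly0 (K : realFieldType) (Rd : nat -> K) dmax : Rpoly Rd dmax 0 = 0.
Proof.
rewrite /Rpoly big_nat big1 // => -[|d] // _.
by rewrite expr0n mulr0.
Qed.

Lemma degree_averaged_prob_connected (K : realFieldType) (Rd : nat -> K) dmax L w j :
  (1 <= w)%N -> Rpoly Rd dmax 1 = 1 ->
  \sum_(1 <= d < dmax.+1) Rd d * prob_connected K L w j d
    = 1 - Rpoly Rd dmax ((out_of_range_count L w j)%:R / w%:R).
Proof.
move=> w_gt0 R1; rewrite -{1}R1 /Rpoly -sumrB; apply: eq_bigr => d _.
by rewrite prob_connectedE // expr1n mulr1 mulrBr mulr1.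
Qed.

Theorem lemma1 (K : realFieldType) (L w m n dmax : nat) (Rd : nat -> K) :
  (1 <= w)%N -> (w.-1 <= L)%N ->
  (forall d, (1 <= d <= dmax)%N -> 0 <= Rd d) ->
  Rpoly Rd dmax 1 = 1 ->
  design_rate m n L w dmax Rd =
  (m * L)%:R /
    ((n * (L.+1 - w))%:R
     + 2 * n%:R * \sum_(1 <= i < w) (1 - Rpoly Rd dmax (i%:R / w%:R))).
Proof.
move=> w_gt0 le_wL _ R1; rewrite /design_rate /expected_connected; congr (_ / _).
under eq_bigr do rewrite degree_averaged_prob_connected //.
rewrite -mulr_sumr.
rewrite (@sum_out_of_range_profile _ (fun i => 1 - Rpoly Rd dmax (i%:R / w%:R))) //.
rewrite mul0r Rpoly0 subr0 (_ : (L.+1 - w = L - w.-1)%N); last by lia.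
by rewrite natrM mulr2n; ring.
Qed.
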